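(* Every involutive Jamesian function is continuous on $[0,1]^2\setminus\{(0,0),(1,1)\}$.
   Context: Let $D=[0,1]^2\setminus\{(0,0),(1,1)\}$. A function $J\colon D\to\mathbb{R}$ is called Jamesian if it satisfies, for all $(a,b)\in D$: (a) $J(a,\tfrac12)=a$; (b) $J(a,0)=1$ for $0<a\le 1$; (c) $J(b,a)=1-J(a,b)$; (d) $J(1-b,1-a)=J(a,b)$; (e) $J(a,b)$ is a non-decreasing function of $a$ for each $0\le b\le 1$ and a strictly increasing function of $a$ for each $0<b<1$. A Jamesian function is called involutive if in addition $J(a,J(a,b))=b$ whenever $0<a<1$ and $0\le b\le 1$. *)

From Stdlib Require Import Reals.
Open Scope R_scope.

Definition inD (a b : R) : Prop :=
  0 <= a <= 1 /\ 0 <= b <= 1 /\ ~ (a = 0 /\ b = 0) /\ ~ (a = 1 /\ b = 1).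

(* J is modelled as a total function R -> R -> R; only its values on D matter. *)
Definition Jamesian (J : R -> R -> R) : Prop :=
  (forall a, 0 <= a <= 1 -> J a (1/2) = a) /\
  (forall a, 0 < a <= 1 -> J a 0 = 1) /\
  (forall a b, inD a b -> J b a = 1 - J a b) /\
  (forall a b, inD a b -> J (1 - b) (1 - a) = J a b) /\
  (forall a a' b, 0 <= b <= 1 -> inD a b -> inD a' b -> a <= a' -> J a b <= J a' b) /\
  (forall a a' b, 0 < b < 1 -> inD a b -> inD a' b -> a < a' -> J a b < J a' b).

Definition involutive_Jamesian (J : R -> R -> R) : Prop :=
  Jamesian J /\
  (forall a b, 0 < a < 1 -> 0 <= b <= 1 -> J a (J a b) = b).

Definition continuous_on_D (J : R -> R -> R) : Prop :=
  forall a b, inD a b ->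
  forall eps, 0 < eps -> exists delta, 0 < delta /\
    forall x y, inD x y ->
      sqrt ((x - a)^2 + (y - b)^2) < delta ->
      Rabs (J x y - J a b) < eps.

(** For fixed [a] in (0,1), the involution axiom makes [y |-> J a y] a
    decreasing bijection of [0,1], so it has no jumps: every value strictly
    between [J a y] and a nearby target is attained close to [y].  Combined
    with monotonicity in the first variable, this gives lower semicontinuity
    of [J] at every point of D; upper semicontinuity follows by applying the
    same bound to [J b a = 1 - J a b]. *)

From Stdlib Require Import Reals Lra.
Open Scope R_scope.

Ltac solve_inD := unfold inD; repeat split; lra.

Lemma inD_swap a b : inD a b -> inD b a.
Proof. unfold inD; intros [? [? [? ?]]]; repeat split; try lra; tauto. Qed.

Lemma Rabs_le_norm u v : Rabs u <= sqrt (u ^ 2 + v ^ 2).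
Proof.
  rewrite <- (sqrt_pow2 (Rabs u)) by apply Rabs_pos.
  apply sqrt_le_1_alt. rewrite pow2_abs. pose proof (pow2_ge_0 v). lra.
Qed.

Section DecreasingInvolution.

Variable f : R -> R.
Hypothesis f_range : forall y, 0 <= y <= 1 -> 0 <= f y <= 1.
Hypothesis f_decr : forall y y', 0 <= y -> y < y' -> y' <= 1 -> f y' < f y.
Hypothesis f_invol : forall y, 0 <= y <= 1 -> f (f y) = y.

Lemma decr_invol_0 : f 0 = 1.
Proof.
  pose proof (f_range 0 ltac:(lra)); pose proof (f_range 1 ltac:(lra)).
  destruct (Req_dec (f 0) 1) as [|Hlt]; [assumption|].
  pose proof (f_decr (f 0) 1 ltac:(lra) ltac:(lra) ltac:(lra)).
  rewrite f_invol in * by lra. lra.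
Qed.

Lemma decr_invol_1 : f 1 = 0.
Proof.
  pose proof (f_range 0 ltac:(lra)); pose proof (f_range 1 ltac:(lra)).
  destruct (Req_dec (f 1) 0) as [|Hgt]; [assumption|].
  pose proof (f_decr 0 (f 1) ltac:(lra) ltac:(lra) ltac:(lra)).
  rewrite f_invol in * by lra. lra.
Qed.

(* The witness is [f t] for [t] strictly between [c] and [f y0]. *)
Lemma decr_invol_gt_right y0 c : 0 <= y0 < 1 -> c < f y0 ->
  exists y, y0 < y < 1 /\ c < f y.
Proof.
  intros Hy0 Hc. pose proof (f_range y0 ltac:(lra)).
  destruct (Rlt_dec c 0).
  { exists ((y0 + 1) / 2). pose proof (f_range ((y0 + 1) / 2)). split; lra. }
  set (t := (c + f y0) / 2).
  exists (f t). rewrite f_invol by (unfold t; lra).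
  rewrite <- (f_invol y0) at 1 by lra.
  pose proof (f_decr t (f y0) ltac:(unfold t; lra) ltac:(unfold t; lra) ltac:(lra)).
  pose proof (f_decr 0 t ltac:(lra) ltac:(unfold t; lra) ltac:(unfold t; lra)).
  rewrite decr_invol_0 in *. unfold t in *; repeat split; lra.
Qed.

Lemma decr_invol_lt_left y0 c : 0 < y0 <= 1 -> f y0 < c ->
  exists y, 0 < y < y0 /\ f y < c.
Proof.
  intros Hy0 Hc. pose proof (f_range y0 ltac:(lra)).
  destruct (Rlt_dec 1 c).
  { exists (y0 / 2). pose proof (f_range (y0 / 2)). split; lra. }
  set (t := (c + f y0) / 2).
  exists (f t). rewrite f_invol by (unfold t; lra).
  rewrite <- (f_invol y0) by lra.
  pose proof (f_decr (f y0) t ltac:(lra) ltac:(unfold t; lra) ltac:(unfold t; lra)).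
  pose proof (f_decr t 1 ltac:(unfold t; lra) ltac:(unfold t; lra) ltac:(lra)).
  rewrite decr_invol_1 in *. unfold t in *; repeat split; lra.
Qed.

End DecreasingInvolution.

Section InvolutiveJamesian.

Variable J : R -> R -> R.
Hypothesis HJ : involutive_Jamesian J.

Lemma J_x0 a : 0 < a <= 1 -> J a 0 = 1.
Proof. destruct HJ as [[_ [H _]] _]; apply H. Qed.

Lemma J_swap a b : inD a b -> J b a = 1 - J a b.
Proof. destruct HJ as [[_ [_ [H _]]] _]; apply H. Qed.

Lemma J_reflect a b : inD a b -> J (1 - b) (1 - a) = J a b.
Proof. destruct HJ as [[_ [_ [_ [H _]]]] _]; apply H. Qed.

Lemma J_le_l a a' b : 0 <= b <= 1 -> inD a b -> inD a' b -> a <= a' -> J a b <= J a' b.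
Proof. destruct HJ as [[_ [_ [_ [_ [H _]]]]] _]; apply H. Qed.

Lemma J_lt_l a a' b : 0 < b < 1 -> inD a b -> inD a' b -> a < a' -> J a b < J a' b.
Proof. destruct HJ as [[_ [_ [_ [_ [_ H]]]]] _]; apply H. Qed.

Lemma J_invol a b : 0 < a < 1 -> 0 <= b <= 1 -> J a (J a b) = b.
Proof. destruct HJ as [_ H]; apply H. Qed.

Lemma J_0y b : 0 < b <= 1 -> J 0 b = 0.
Proof. intros. rewrite J_swap, J_x0 by (lra || solve_inD). ring. Qed.

Lemma J_x1 a : 0 <= a < 1 -> J a 1 = 0.
Proof.
  intros. rewrite <- J_reflect by solve_inD.
  replace (1 - 1) with 0 by ring. apply J_0y; lra.
Qed.

Lemma J_1y b : 0 <= b < 1 -> J 1 b = 1.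
Proof. intros. rewrite J_swap, J_x1 by (lra || solve_inD). ring. Qed.

Lemma J_range x y : inD x y -> 0 <= J x y <= 1.
Proof.
  intros HD; pose proof HD as [Hx [Hy [H00 H11]]].
  destruct (Req_dec y 0) as [->|Hy0].
  { rewrite J_x0; [lra|]. destruct (Req_dec x 0); [subst; tauto|lra]. }
  destruct (Req_dec y 1) as [->|Hy1].
  { rewrite J_x1; [lra|]. destruct (Req_dec x 1); [subst; tauto|lra]. }
  rewrite <- (J_0y y), <- (J_1y y) by lra.
  split; apply J_le_l; (lra || solve_inD).
Qed.

Lemma J_lt_r a y y' : 0 < a < 1 -> 0 <= y -> y < y' -> y' <= 1 -> J a y' < J a y.
Proof.
  intros. rewrite (J_swap y a), (J_swap y' a) by solve_inD.
  assert (J y a < J y' a) by (apply J_lt_l; (lra || solve_inD)). lra.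
Qed.

Lemma J_le_r a y y' : 0 < a < 1 -> 0 <= y -> y <= y' -> y' <= 1 -> J a y' <= J a y.
Proof.
  intros. destruct (Req_dec y y') as [->|]; [lra|].
  left; apply J_lt_r; lra.
Qed.

Lemma J_gt_right a b c : 0 < a <= 1 -> 0 <= b < 1 -> c < J a b ->
  exists b', b < b' < 1 /\ c < J a b'.
Proof.
  intros Ha Hb Hc. destruct (Req_dec a 1) as [->|].
  - exists ((b + 1) / 2). rewrite J_1y in * by lra. split; lra.
  - apply (decr_invol_gt_right (J a)); auto.
    + intros y Hy; apply J_range; solve_inD.
    + intros; apply J_lt_r; lra.
    + intros; apply J_invol; lra.
Qed.

Lemma J_lt_left a b c : 0 < a < 1 -> 0 < b <= 1 -> J a b < c ->
  exists x, 0 < x < b /\ J a x < c.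
Proof.
  intros Ha Hb Hc. apply (decr_invol_lt_left (J a)); auto.
  - intros y Hy; apply J_range; solve_inD.
  - intros; apply J_lt_r; lra.
  - intros; apply J_invol; lra.
Qed.

(* Choose [b' > b] with [J a b' > c], then [x0 < a] with [J x0 b' > c];
   monotonicity in both variables bounds [J] on the box [x > x0], [y < b']. *)
Lemma J_lower_semicontinuous a b eps : inD a b -> 0 < eps ->
  exists delta, 0 < delta /\ forall x y, inD x y ->
    Rabs (x - a) < delta -> Rabs (y - b) < delta -> J a b - eps < J x y.
Proof.
  intros HD Heps; pose proof HD as [Ha [Hb [H00 H11]]].
  pose proof (J_range a b HD).
  destruct (Rlt_dec (J a b - eps) 0).
  { exists 1; split; [lra|]. intros x y Hxy _ _. pose proof (J_range x y Hxy); lra. }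
  assert (Ha0 : 0 < a).
  { destruct (Req_dec a 0) as [->|]; [|lra]. assert (J 0 b = 0); [|lra]. apply J_0y.
    destruct (Req_dec b 0); [subst; tauto|lra]. }
  assert (Hb1 : b < 1).
  { destruct (Req_dec b 1) as [->|]; [|lra]. assert (J a 1 = 0); [|lra]. apply J_x1.
    destruct (Req_dec a 1); [subst; tauto|lra]. }
  set (c := J a b - eps).
  destruct (J_gt_right a b c) as [b' [Hbb' Hcb']]; try (unfold c; lra).
  rewrite (J_swap b' a) in Hcb' by solve_inD.
  destruct (J_lt_left b' a (1 - c)) as [x0 [Hx0 Hx0c]]; try lra.
  rewrite (J_swap x0 b') in Hx0c by solve_inD.
  exists (Rmin (a - x0) (b' - b)). split; [apply Rmin_pos; lra|].
  intros x y Hxy Hxa Hyb; pose proof Hxy as [Hx [Hy _]].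
  pose proof (Rmin_l (a - x0) (b' - b)); pose proof (Rmin_r (a - x0) (b' - b)).
  apply Rabs_def2 in Hxa; apply Rabs_def2 in Hyb.
  assert (J x0 b' <= J x0 y) by (apply J_le_r; lra).
  assert (J x0 y <= J x y) by (apply J_le_l; (lra || solve_inD)).
  fold c; lra.
Qed.

End InvolutiveJamesian.

Theorem proposition5p2 (J : R -> R -> R) :
  involutive_Jamesian J -> continuous_on_D J.
Proof.
  intros HJ a b HD eps Heps.
  destruct (J_lower_semicontinuous J HJ a b eps HD Heps) as [d1 [Hd1 Hlow]].
  destruct (J_lower_semicontinuous J HJ b a eps (inD_swap _ _ HD) Heps)
    as [d2 [Hd2 Hup]].
  exists (Rmin d1 d2). split; [apply Rmin_pos; lra|].
  intros x y Hxy Hdist.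
  pose proof (Rmin_l d1 d2); pose proof (Rmin_r d1 d2).
  pose proof (Rabs_le_norm (x - a) (y - b)).
  pose proof (Rabs_le_norm (y - b) (x - a)) as Hyb.
  rewrite Rplus_comm in Hyb.
  specialize (Hlow x y Hxy ltac:(lra) ltac:(lra)).
  specialize (Hup y x (inD_swap _ _ Hxy) ltac:(lra) ltac:(lra)).
  rewrite (J_swap J HJ a b HD), (J_swap J HJ x y Hxy) in Hup.
  apply Rabs_def1; lra.
Qed.
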